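(* Let $q$ be a prime power, $m>4$, $V=\mathbb F_q^m$ with a fixed ordered basis, and $\mu=m-1$. There exists a $(\mu+1)$-dimensional subspace of $\bigwedge^2V$ containing exactly $(q^{\mu}-1)+q^2(q-1)$ decomposable vectors, and the remaining $(q^{\mu}-q^2)(q-1)$ nonzero elements of this subspace are of rank $4$.
   Context: A nonzero $\omega\in\bigwedge^2V$ is decomposable if $\omega=u\wedge v$ for some $u,v\in V$. With respect to the fixed basis $e_1,\dots,e_m$, let $\sigma:\bigwedge^2V\to\{m\times m\text{ skew-symmetric matrices}\}$ be the linear isomorphism with $\sigma(e_r\wedge e_s)=\mathbf e_r\mathbf e_s^t-\mathbf e_s\mathbf e_r^t$ ($r<s$, $\mathbf e_i$ standard column vectors); the rank of $\omega\in\bigwedge^2V$ is the rank of the matrix $\sigma(\omega)$. *)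

From HB Require Import structures.
From mathcomp Require Import all_boot all_order all_algebra all_field.
Set Implicit Arguments. Unset Strict Implicit. Unset Printing Implicit Defensive.
Import GRing.Theory.
Local Open Scope ring_scope.

(* Index set of the standard basis e_r /\ e_s (r < s) of /\^2 V, V = F^m. *)
Definition I2 (m : nat) := {p : 'I_m * 'I_m | (p.1 < p.2)%N}.

(* /\^2 V, as coordinate vectors w.r.t. the basis e_r /\ e_s, r < s. *)
Definition wedge2 (F : fieldType) (m : nat) := {ffun I2 m -> F^o}.

Definition wedge (F : fieldType) (m : nat) (u v : 'rV[F]_m) : wedge2 F m :=
  [ffun p : I2 m => u 0 (val p).1 * v 0 (val p).2 - u 0 (val p).2 * v 0 (val p).1].

Definition sigma (F : fieldType) (m : nat) (w : wedge2 F m) : 'M[F]_m :=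
  \sum_(p : I2 m) (w p : F) *: (delta_mx (val p).1 (val p).2 - delta_mx (val p).2 (val p).1).

Definition wrank (F : fieldType) (m : nat) (w : wedge2 F m) : nat := \rank (sigma w).

Definition decomposable (F : finFieldType) (m : nat) (w : wedge2 F m) : bool :=
  (w != 0) && [exists u : 'rV[F]_m, exists v : 'rV[F]_m, w == wedge u v].

From HB Require Import structures.
From mathcomp Require Import all_boot all_order all_algebra all_field.
From mathcomp Require Import ring zify.
Import GRing.Theory.
Local Open Scope ring_scope.
Set Implicit Arguments. Unset Strict Implicit. Unset Printing Implicit Defensive.

(* An element of W = e_0 /\ V + <e_1 /\ e_2> reads w = e_0 /\ a + c e_1 /\ e_2. If c = 0,
   then w = e_0 /\ a; if a lies in <e_1, e_2>, then w lies in /\^2 <e_0, e_1, e_2>, where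
   every nonzero vector is decomposable. Otherwise c != 0 and a_j != 0 for some j > 2, and the
   Pluecker relation on the indices 0, 1, 2, j fails, so w is not decomposable. Both families
   are coordinate subspaces, so inclusion-exclusion gives the counts. For the rank, sigma w is
   a sum of four outer products, while its principal minor on the indices 0, 1, 2, j is
   invertible. *)

Section Coefficients.
Variables (F : fieldType) (m : nat).

(* The coefficient of e_i /\ e_j in w, read as 0 unless i < j. *)
Definition wcoef (w : wedge2 F m) (i j : 'I_m) : F :=
  oapp (fun p => w p : F) 0 (insub (i, j)).

Lemma wcoef_val (w : wedge2 F m) (p : I2 m) : wcoef w (val p).1 (val p).2 = w p.
Proof. by rewrite /wcoef -surjective_pairing valK. Qed.

Lemma wcoef_ge (w : wedge2 F m) (i j : 'I_m) : (j <= i)%N -> wcoef w i j = 0.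
Proof. by move=> le_ji; rewrite /wcoef insubF //= ltnNge le_ji. Qed.

Lemma wcoef_wedge (u v : 'rV[F]_m) (i j : 'I_m) : (i < j)%N ->
  wcoef (wedge u v) i j = u 0 i * v 0 j - u 0 j * v 0 i.
Proof. by move=> lt_ij; rewrite /wcoef insubT /= ffunE. Qed.

Lemma wedge_plucker (u v : 'rV[F]_m) (a b c d : 'I_m) :
  (a < b)%N -> (b < c)%N -> (c < d)%N ->
  let p := wcoef (wedge u v) in p a b * p c d - p a c * p b d + p a d * p b c = 0.
Proof.
move=> lt_ab lt_bc lt_cd /=.
have lt_ac := ltn_trans lt_ab lt_bc; have lt_bd := ltn_trans lt_bc lt_cd.
rewrite !wcoef_wedge // ?(ltn_trans lt_ac lt_cd) //; ring.
Qed.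

Lemma sum_wcoef (w : wedge2 F m) (x : 'I_m * 'I_m) :
  \sum_(p : I2 m) (w p : F) * ((val p == x)%:R : F) = wcoef w x.1 x.2.
Proof.
rewrite /wcoef -surjective_pairing; case: insubP => [u _ ux|nx] /=.
  rewrite (bigD1 u) //= ux eqxx mulr1 big1 ?addr0 // => p pu.
  by rewrite -ux (inj_eq val_inj) (negPf pu) mulr0.
apply: big1 => p _; case: eqP => [px|]; last by rewrite mulr0.
by move: nx; rewrite -px (valP p).
Qed.

Lemma sigma_wcoef (w : wedge2 F m) (i j : 'I_m) :
  sigma w i j = wcoef w i j - wcoef w j i.
Proof.
rewrite /sigma summxE -(sum_wcoef w (i, j)) -(sum_wcoef w (j, i)) -sumrB.
apply: eq_bigr => p _; rewrite !mxE mulrBr.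
by case: (val p) => a b /=; rewrite !xpair_eqE (eq_sym i a) (eq_sym j b) (eq_sym j a)
  (eq_sym i b) (andbC (a == j)).
Qed.

End Coefficients.

Section MatrixRank.
Variable F : fieldType.

Lemma mxrank_mxsub m1 n1 m2 n2 (f : 'I_m1 -> 'I_m2) (g : 'I_n1 -> 'I_n2)
    (A : 'M[F]_(m2, n2)) :
  (\rank (mxsub f g A) <= \rank A)%N.
Proof.
have -> : mxsub f g A = rowsub f (colsub g A) by apply/matrixP => i j; rewrite !mxE.
apply: leq_trans (mxrankS (rowsub_sub _ _)) _.
by rewrite -mxrank_tr -[X in (_ <= X)%N]mxrank_tr trmx_mxsub mxrankS ?rowsub_sub.
Qed.

Lemma mxrank_outer k l (u : 'rV[F]_k) (v : 'rV[F]_l) : (\rank (u^T *m v) <= 1)%N.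
Proof. exact: leq_trans (mxrankM_maxl _ _) (rank_leq_col _). Qed.

End MatrixRank.

Section CoordinateSubspaces.
Variables (F : finFieldType) (m : nat).
Implicit Types (X Y : {set I2 m}) (w : wedge2 F m).

Definition supp_on X : {set wedge2 F m} :=
  [set w : wedge2 F m | [forall p, (p \notin X) ==> (w p == 0)]].

Definition coordsp X : {vspace wedge2 F m} := <<enum (supp_on X)>>%VS.

Lemma supp_on0 w X p : w \in supp_on X -> p \notin X -> w p = 0.
Proof. by rewrite inE => /forallP/(_ p)/implyP pX /pX/eqP. Qed.

Lemma supp_onP w X : reflect (forall p, p \notin X -> w p = 0) (w \in supp_on X).
Proof.
apply: (iffP idP) => [wX p|wX]; first exact: supp_on0.
by rewrite inE; apply/forallP => p; apply/implyP => /wX ->.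
Qed.

Lemma mem0_supp_on X : (0 : wedge2 F m) \in supp_on X.
Proof. by apply/supp_onP => p _; rewrite ffunE. Qed.

Lemma supp_onS X Y : X \subset Y -> supp_on X \subset supp_on Y.
Proof.
move=> /subsetP sXY; apply/subsetP => w /supp_onP wX; apply/supp_onP => p pY.
by apply: wX; apply: contra pY; apply: sXY.
Qed.

Lemma supp_onI X Y : supp_on X :&: supp_on Y = supp_on (X :&: Y).
Proof.
apply/setP => w; rewrite inE; apply/andP/supp_onP => [[wX wY] p|wXY].
  by rewrite inE negb_and => /orP[]; [apply: supp_on0 wX | apply: supp_on0 wY].
by split; apply/supp_onP => p pX; apply: wXY; rewrite inE (negPf pX) ?andbF.
Qed.

Lemma card_supp_on X : #|supp_on X| = (#|F| ^ #|X|)%N.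
Proof.
rewrite -(card_pffun_on (0 : F^o) X predT) -cardsE; apply: eq_card => w; rewrite !inE.
apply/forallP/pffun_onP => [wX|[/subsetP sX _] p]; last first.
  by apply/implyP => pX; apply/negPn; apply: contra pX => /sX.
split=> //; apply/subsetP => p; rewrite inE; apply: contraR => pX.
by move: (wX p); rewrite pX.
Qed.

Lemma mem_coordsp X w : (w \in coordsp X) = (w \in supp_on X).
Proof.
apply/idP/idP => [/coord_span ->|wX]; last by apply: memv_span; rewrite mem_enum.
apply/supp_onP => p pX; rewrite sum_ffunE; apply: big1 => i _; rewrite ffunE.
have : (enum_tuple (supp_on X))`_i \in supp_on X.
  by rewrite -mem_enum (mem_nth 0) // size_tuple.
by move/supp_on0 => ->; rewrite ?scaler0.
Qed.

Lemma dim_coordsp X : \dim (coordsp X) = #|X|.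
Proof.
apply: (expnI (card_finNzRing_gt1 F)).
by rewrite -card_vspace -card_supp_on; apply: eq_card => w; rewrite mem_coordsp.
Qed.

End CoordinateSubspaces.

Section Construction.
Variable n : nat.
Local Notation m := n.+3.

Definition o0 : 'I_m := @Ordinal m 0 isT.
Definition o1 : 'I_m := @Ordinal m 1 isT.
Definition o2 : 'I_m := @Ordinal m 2 isT.
Definition p01 : I2 m := exist _ (o0, o1) isT.
Definition p02 : I2 m := exist _ (o0, o2) isT.
Definition p12 : I2 m := exist _ (o1, o2) isT.

(* Index sets of e_0 /\ V, of /\^2 <e_0, e_1, e_2>, and of the subspace
   W = e_0 /\ V + <e_1 /\ e_2>. *)
Definition pairs_e0 : {set I2 m} := [set p : I2 m | (val p).1 == o0].
Definition pairs_012 : {set I2 m} := p01 |: [set p02; p12].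
Definition pairs_W : {set I2 m} := p12 |: pairs_e0.

Lemma mem_pairs_012 (p : I2 m) : (p \in pairs_012) = ((val p).2 < 3)%N.
Proof.
rewrite !inE; case: p => [[[i hi] [j hj]] /= lt_ij].
by case: j hj lt_ij => [|[|[|j]]] hj; case: i hi => [|[|[|i]]] hi.
Qed.

Lemma card_pairs_e0 : #|pairs_e0| = n.+2.
Proof.
have snd_inj : {in pairs_e0 &, injective (fun p : I2 m => (val p).2)}.
  move=> [[a b] hab] [[a' b'] hab']; rewrite !inE /= => /eqP a0 /eqP a'0 eq_b.
  by apply: val_inj; rewrite /= a0 a'0 eq_b.
rewrite -(card_in_imset snd_inj).
suff <- : [set~ o0] = (fun p : I2 m => (val p).2) @: pairs_e0.
  by rewrite cardsC1 card_ord.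
apply/setP => j; rewrite !inE; apply/idP/imsetP => [j0|[[[a b] hab]]].
  have lt_0j : ((o0, j).1 < (o0, j).2)%N by rewrite lt0n.
  by exists (exist _ (o0, j) lt_0j); rewrite ?inE.
by rewrite inE /= => /eqP a0 ->; apply: contraTneq hab => ->; rewrite a0.
Qed.

Lemma card_pairs_W : #|pairs_W| = m.
Proof. by rewrite cardsU1 card_pairs_e0 inE. Qed.

Lemma card_pairs_012 : #|pairs_012| = 3.
Proof. by rewrite cardsU1 cards2 !inE. Qed.

Lemma card_pairs_e0I012 : #|pairs_e0 :&: pairs_012| = 2.
Proof.
suff -> : pairs_e0 :&: pairs_012 = [set p01; p02] by rewrite cards2.
apply/setP => p; rewrite !inE.
case: (eqVneq p p01) => [->//|_]; case: (eqVneq p p02) => [->//|_].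
by case: (eqVneq p p12) => [->|]; rewrite ?andbF.
Qed.

Lemma pairs_e0_W : pairs_e0 \subset pairs_W.
Proof. exact: subsetUr. Qed.

Lemma pairs_012_W : pairs_012 \subset pairs_W.
Proof. by apply/subsetP => p; rewrite !inE => /or3P[] /eqP->. Qed.

End Construction.

Arguments o0 {n}. Arguments o1 {n}. Arguments o2 {n}.
Arguments p01 {n}. Arguments p02 {n}. Arguments p12 {n}.
Arguments pairs_e0 {n}. Arguments pairs_012 {n}. Arguments pairs_W {n}.

Section Decomposability.
Variables (F : finFieldType) (n : nat).
Local Notation m := n.+3.
Local Notation e i := (delta_mx 0 i : 'rV[F]_m).
Implicit Types (w : wedge2 F m).

Lemma gt2_neq012 (j : 'I_m) :
  (2 < j)%N -> [/\ (j == o0) = false, (j == o1) = false & (j == o2) = false].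
Proof. by case: j => [[|[|[|j]]] ?]. Qed.

Lemma wcoef_W w (i j : 'I_m) : w \in supp_on F pairs_W ->
  wcoef w i j = (i == o0)%:R * wcoef w o0 j + w p12 * ((i == o1)%:R * (j == o2)%:R).
Proof.
move=> wW; have [->|i0] := eqVneq i o0; first by rewrite mul1r mul0r mulr0 addr0.
rewrite mul0r add0r; have [/andP[/eqP-> /eqP->]|n12] := boolP ((i == o1) && (j == o2)).
  by rewrite -(wcoef_val w p12) !mulr1.
rewrite (_ : _ * _ = 0) ?mulr0; last first.
  by case: (i == o1) n12; case: (j == o2); rewrite ?mul0r ?mulr0.
have [le_ji|lt_ij] := leqP j i; first exact: wcoef_ge.
rewrite /wcoef insubT /=; apply: (supp_on0 wW); rewrite in_setU1 inE negb_or /= i0 andbT.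
by apply: contra n12 => /eqP/(congr1 val) [-> ->]; rewrite !eqxx.
Qed.

Lemma mem_supp_e0_W w : w \in supp_on F pairs_W ->
  (w \in supp_on F pairs_e0) = (w p12 == 0).
Proof.
move=> wW; apply/idP/eqP => [we0|c0]; first by rewrite (supp_on0 we0) // inE.
apply/supp_onP => p pe0; have [->//|pp12] := eqVneq p p12.
by apply: supp_on0 wW _; rewrite in_setU1 negb_or pp12.
Qed.

Lemma wedge_e0 w : w \in supp_on F pairs_W -> w p12 = 0 ->
  w = wedge (e o0) (\row_j wcoef w o0 j).
Proof.
move=> wW c0; apply/ffunP => p; rewrite ffunE !mxE -wcoef_val (wcoef_W _ _ wW) c0.
rewrite mul0r addr0; case: p => [[i j] lt_ij] /=.
by rewrite (_ : (j == o0) = false) ?mul0r ?subr0 //; apply: contraTF lt_ij => /eqP->.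
Qed.

Lemma wedge_012 w : w \in supp_on F pairs_012 -> w p12 != 0 ->
  w = wedge (\row_j (if j == o0 then w p02 / w p12 else (j == o1)%:R))
            (\row_j (if j == o0 then - w p01 else w p12 * (j == o2)%:R)).
Proof.
move=> w012 c0; apply/ffunP => p; rewrite ffunE !mxE.
have [|p012] := boolP (p \in pairs_012); last first.
  rewrite (supp_on0 w012 p012); move: p012; rewrite mem_pairs_012 -leqNgt.
  by case/gt2_neq012 => -> -> ->; rewrite !mulr0 mul0r subrr.
by rewrite !inE => /or3P[] /eqP-> /=; field.
Qed.

Lemma exists_wcoef_e0 w : w \in supp_on F pairs_W -> w \notin supp_on F pairs_012 ->
  exists2 j : 'I_m, (2 < j)%N & wcoef w o0 j != 0.
Proof.
move=> wW; rewrite inE => /forallPn[p]; rewrite negb_imply => /andP[p012 wp].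
have pW : p \in pairs_W by apply: contraR wp => /(supp_on0 wW) ->.
have pe0 : (val p).1 == o0.
  by move: pW; rewrite in_setU1 inE => /orP[/eqP pp12|//]; rewrite pp12 !inE in p012.
exists (val p).2; first by move: p012; rewrite mem_pairs_012 -leqNgt.
by rewrite -(eqP pe0) wcoef_val.
Qed.

Lemma not_decomposable_W w (j : 'I_m) : w \in supp_on F pairs_W -> w p12 != 0 ->
  (2 < j)%N -> wcoef w o0 j != 0 -> ~~ decomposable w.
Proof.
move=> wW c0 j2 aj; apply/negP => /andP[_ /existsP[u /existsP[v /eqP wuv]]].
have [_ _ j_neq2] := gt2_neq012 j2.
have z1 : wcoef w o1 j = 0 by rewrite wcoef_W // j_neq2 !mulr0 mul0r addr0.
have z2 : wcoef w o2 j = 0 by rewrite wcoef_W // !mul0r mulr0 addr0.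
have := wedge_plucker u v (isT : (o0 < o1)%N) (isT : (o1 < o2)%N) j2.
rewrite /= -wuv z1 z2 !mulr0 subr0 add0r (wcoef_val w p12) => /eqP.
by rewrite mulf_eq0 (negPf aj) (negPf c0).
Qed.

Lemma decomposable_W w : w \in supp_on F pairs_W ->
  decomposable w =
    (w != 0) && ((w \in supp_on F pairs_e0) || (w \in supp_on F pairs_012)).
Proof.
move=> wW; rewrite (mem_supp_e0_W wW).
have [c0|c0] := eqVneq (w p12) 0.
  rewrite /decomposable orTb andbT; case: (w != 0) => //=.
  by apply/existsP; exists (e o0); apply/existsP; eexists; apply/eqP; apply: wedge_e0.
have [w012|w012] := boolP (w \in supp_on F pairs_012).
  rewrite /decomposable orbT andbT; case: (w != 0) => //=.
  by apply/existsP; eexists; apply/existsP; eexists; apply/eqP; apply: wedge_012.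
have [j j2 aj] := exists_wcoef_e0 wW w012.
by rewrite andbF; apply/negbTE/(not_decomposable_W wW c0 j2 aj).
Qed.

End Decomposability.

Section Rank.
Variables (F : finFieldType) (n : nat).
Local Notation m := n.+3.
Local Notation e i := (delta_mx 0 i : 'rV[F]_m).
Variable w : wedge2 F m.
Hypothesis wW : w \in supp_on F pairs_W.
Local Notation a := (\row_j wcoef w o0 j).
Local Notation c := (w p12).

Lemma sigma_W : sigma w = (e o0)^T *m a + a^T *m (- e o0)
                        + (e o1)^T *m (c *: e o2) + (e o2)^T *m (- (c *: e o1)).
Proof.
apply/matrixP => i j; rewrite sigma_wcoef (wcoef_W i j wW) (wcoef_W j i wW).
by rewrite !mxE !big_ord1 !mxE /=; ring.
Qed.

Lemma wrank_W_le4 : (wrank w <= 4)%N.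
Proof.
rewrite /wrank sigma_W -[4%N]/(1 + 1 + 1 + 1)%N.
do 3 (apply: leq_trans (mxrank_add _ _) _; apply: leq_add; last exact: mxrank_outer).
exact: mxrank_outer.
Qed.

Lemma wrank_W_ge4 (j : 'I_m) : c != 0 -> (2 < j)%N -> wcoef w o0 j != 0 ->
  (4 <= wrank w)%N.
Proof.
move=> c0 j2 aj0; have [j_neq0 j_neq1 j_neq2] := gt2_neq012 j2.
have sigmaE i k : sigma w i k =
    (i == o0)%:R * wcoef w o0 k + c * ((i == o1)%:R * (k == o2)%:R)
    - ((k == o0)%:R * wcoef w o0 i + c * ((k == o1)%:R * (i == o2)%:R)).
  by rewrite sigma_wcoef (wcoef_W i k wW) (wcoef_W k i wW).
have a00 : wcoef w o0 o0 = 0 by rewrite wcoef_ge.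
pose f (k : 'I_4) := match val k with 0 => o0 | 1 => o1 | 2 => o2 | _ => j end.
set a1 := wcoef w o0 o1; set a2 := wcoef w o0 o2; set aj := wcoef w o0 j in aj0 *.
(* The inverse of the minor of sigma w on the indices 0, 1, 2, j, whose Pfaffian is aj * c. *)
pose K : 'M[F]_4 := \matrix_(k, l) match val k, val l with
  | 0, 3 => - aj^-1
  | 1, 2 => - c^-1
  | 1, 3 => a2 / (aj * c)
  | 2, 1 => c^-1
  | 2, 3 => - a1 / (aj * c)
  | 3, 0 => aj^-1
  | 3, 1 => - a2 / (aj * c)
  | 3, 2 => a1 / (aj * c)
  | _, _ => 0 end.
have minorK : mxsub f f (sigma w) *m K = 1%:M.
  apply/matrixP => k l; rewrite !mxE !big_ord_recl big_ord0 !mxE !sigmaE.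
  case: k => [[|[|[|[|k]]]] ?] //; case: l => [[|[|[|[|l]]]] ?] //;
    rewrite /f /= ?j_neq0 ?j_neq1 ?j_neq2 ?eqxx ?a00 -/a1 -/a2 -/aj /=;
    by field; rewrite ?c0 ?aj0.
rewrite /wrank; apply: leq_trans (mxrank_mxsub f f (sigma w)).
by rewrite -[X in (X <= _)%N](mxrank1 F 4) -minorK mxrankM_maxl.
Qed.

End Rank.

Section Counting.
Variables (F : finFieldType) (n : nat).
Local Notation m := n.+3.
Local Notation q := #|F|.
Local Notation W := (supp_on F (@pairs_W n)).
Local Notation E0 := (supp_on F (@pairs_e0 n)).
Local Notation E012 := (supp_on F (@pairs_012 n)).

Lemma wrank_nondec_W (w : wedge2 F m) :
  w \in W -> w != 0 -> ~~ decomposable w -> wrank w = 4.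
Proof.
move=> wW w0; rewrite decomposable_W // w0 negb_or => /andP[we0 w012].
have c0 : w p12 != 0 by rewrite -(mem_supp_e0_W wW).
have [j j2 aj] := exists_wcoef_e0 wW w012.
by apply/eqP; rewrite eqn_leq wrank_W_le4 // (wrank_W_ge4 wW c0 j2 aj).
Qed.

Lemma card_supp_e0U012 : #|E0 :|: E012| = (q ^ n.+2 + q ^ 2 * (q - 1))%N.
Proof.
have := cardsUI E0 E012.
rewrite supp_onI !card_supp_on card_pairs_e0 card_pairs_012 card_pairs_e0I012.
have : (q ^ 2 <= q ^ 3)%N by rewrite leq_exp2l ?card_finNzRing_gt1.
rewrite mulnBr muln1 -expnSr; lia.
Qed.

Lemma decomposable_W_set :
  [set w : wedge2 F m | (w \in coordsp F pairs_W) && decomposable w] =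
    (E0 :|: E012) :\ (0 : wedge2 F m).
Proof.
apply/setP => w; rewrite in_set mem_coordsp in_setD1 in_setU.
have [wW|wW] := boolP (w \in W); first by rewrite decomposable_W.
have notin (X : {set I2 m}) : X \subset pairs_W -> (w \in supp_on F X) = false.
  by move=> sXW; apply: contraNF wW; apply/subsetP/supp_onS.
by rewrite !notin ?pairs_e0_W ?pairs_012_W ?andbF.
Qed.

Lemma nondecomposable_W_set :
  [set w : wedge2 F m | [&& w \in coordsp F pairs_W, w != 0 & ~~ decomposable w]] =
    W :\: (E0 :|: E012).
Proof.
apply/setP => w; rewrite in_set mem_coordsp in_setD in_setU andbC.
have [wW|] := boolP (w \in W); last by rewrite !andbF.
rewrite decomposable_W //.
by have [->|w0] := eqVneq w 0; rewrite ?mem0_supp_on ?andbT.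
Qed.

Lemma card_decomposable_W :
  #|[set w : wedge2 F m | (w \in coordsp F pairs_W) && decomposable w]| =
    ((q ^ n.+2 - 1) + q ^ 2 * (q - 1))%N.
Proof.
rewrite decomposable_W_set addnBAC; last by rewrite expn_gt0 ltnW ?card_finNzRing_gt1.
rewrite -card_supp_e0U012 (cardsD1 (0 : wedge2 F m) (E0 :|: E012)) in_setU mem0_supp_on.
by rewrite add1n subn1.
Qed.

Lemma card_nondecomposable_W :
  #|[set w : wedge2 F m | [&& w \in coordsp F pairs_W, w != 0 & ~~ decomposable w]]| =
    ((q ^ n.+2 - q ^ 2) * (q - 1))%N.
Proof.
rewrite nondecomposable_W_set cardsD (setIidPr _); last first.
  by rewrite subUset !supp_onS ?pairs_e0_W ?pairs_012_W.
rewrite card_supp_on card_pairs_W card_supp_e0U012 subnDA mulnBl.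
by congr subn; rewrite mulnBr muln1 -expnSr.
Qed.

End Counting.

Theorem lemma6p5 (F : finFieldType) (q m : nat) :
  #|F| = q -> (4 < m)%N ->
  exists W : {vspace wedge2 F m},
    \dim W = m /\
    #|[set w : wedge2 F m | (w \in W) && decomposable w]| =
      ((q ^ (m - 1) - 1) + q ^ 2 * (q - 1))%N /\
    #|[set w : wedge2 F m | [&& w \in W, w != 0 & ~~ decomposable w]]| =
      ((q ^ (m - 1) - q ^ 2) * (q - 1))%N /\
    (forall w : wedge2 F m, w \in W -> w != 0 -> ~~ decomposable w ->
       wrank w = 4%N).
Proof.
move=> <-; case: m => [|[|[|n]]] // _; rewrite subSS subn0.
exists (coordsp F (@pairs_W n)); split; first by rewrite dim_coordsp card_pairs_W.
split; first exact: card_decomposable_W.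
split; first exact: card_nondecomposable_W.
by move=> w; rewrite mem_coordsp; apply: wrank_nondec_W.
Qed.
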